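(* Let $n\ge2$ be even. If a variety $\mathcal V$ is $(n+1)$-distributive, then $\mathcal V$ is $2n$-modular, i.e. it satisfies $\alpha(\beta\circ\alpha\gamma\circ\beta)\subseteq\alpha\beta\circ_{2n}\alpha\gamma$ for all congruences $\alpha,\beta,\gamma$.
   Context: $\circ$ is relational composition, juxtaposition is intersection. For relations $X,Y$ and $m\ge1$, $X\circ_m Y$ denotes $X\circ Y\circ X\circ\cdots$ with $m$ factors. A variety is $(n+1)$-distributive if all its algebras satisfy $\alpha(\beta\circ\gamma)\subseteq\alpha\beta\circ_{n+1}\alpha\gamma$ for all congruences $\alpha,\beta,\gamma$; equivalently, it has Jónsson terms $j_0,\dots,j_{n+1}$: ternary terms with $x=j_0(x,y,z)$, $x=j_i(x,y,x)$ for all $i$, $j_i(x,z,z)=j_{i+1}(x,z,z)$ for odd $i$, $j_i(x,x,z)=j_{i+1}(x,x,z)$ for even $i$, and $j_{n+1}(x,y,z)=z$. *)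

From Stdlib Require Import PeanoNat.

Set Implicit Arguments.

Record signature := Signature {
  op_sym :> Type;
  arity : op_sym -> nat
}.

Definition fin (k : nat) := { i : nat | i < k }.

Record algebra (sg : signature) := Algebra {
  carrier :> Type;
  interp : forall f : sg, (fin (arity sg f) -> carrier) -> carrier
}.

Inductive term (sg : signature) : Type :=
| Var : nat -> term sg
| App : forall f : sg, (fin (arity sg f) -> term sg) -> term sg.

Fixpoint eval (sg : signature) (A : algebra sg) (v : nat -> A) (t : term sg) : A :=
  match t with
  | Var _ x => v x
  | App f args => interp A f (fun i => eval A v (args i))
  end.

Definition identity (sg : signature) := (term sg * term sg)%type.

Definition satisfies (sg : signature) (A : algebra sg) (e : identity sg) : Prop :=
  forall v : nat -> A, eval A v (fst e) = eval A v (snd e).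

(* The variety axiomatized by a set of identities Sigma (Birkhoff: every
   variety is of this form). *)
Definition in_variety (sg : signature) (Sigma : identity sg -> Prop) (A : algebra sg) : Prop :=
  forall e, Sigma e -> satisfies A e.

Definition rel (T : Type) := T -> T -> Prop.

Definition is_congruence (sg : signature) (A : algebra sg) (th : rel A) : Prop :=
  (forall x, th x x) /\
  (forall x y, th x y -> th y x) /\
  (forall x y z, th x y -> th y z -> th x z) /\
  (forall (f : sg) (a b : fin (arity sg f) -> A),
      (forall i, th (a i) (b i)) -> th (interp A f a) (interp A f b)).

Definition rcomp (T : Type) (X Y : rel T) : rel T :=
  fun x z => exists y, X x y /\ Y y z.
Definition rmeet (T : Type) (X Y : rel T) : rel T :=
  fun x y => X x y /\ Y x y.
Definition rsub (T : Type) (X Y : rel T) : Prop :=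
  forall x y, X x y -> Y x y.

(* X o_m Y = X o Y o X o ... with m factors (m >= 1; m = 0 gives equality). *)
Fixpoint rcomp_n (T : Type) (m : nat) (X Y : rel T) : rel T :=
  match m with
  | 0 => fun x y => x = y
  | 1 => X
  | S m' => rcomp X (rcomp_n m' Y X)
  end.

Definition distributive_k (sg : signature) (Sigma : identity sg -> Prop) (k : nat) : Prop :=
  forall (A : algebra sg), in_variety Sigma A ->
  forall al be ga : rel A,
    is_congruence A al -> is_congruence A be -> is_congruence A ga ->
    rsub (rmeet al (rcomp be ga)) (rcomp_n k (rmeet al be) (rmeet al ga)).

Definition modular_k (sg : signature) (Sigma : identity sg -> Prop) (k : nat) : Prop :=
  forall (A : algebra sg), in_variety Sigma A ->
  forall al be ga : rel A,
    is_congruence A al -> is_congruence A be -> is_congruence A ga ->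
    rsub (rmeet al (rcomp be (rcomp (rmeet al ga) be)))
         (rcomp_n k (rmeet al be) (rmeet al ga)).

(* Jónsson terms need not be actual terms here: it suffices to have ternary
   operations J_0, ..., J_(n+1) on A that are compatible with every congruence
   and satisfy the Jónsson identities.  They are obtained by applying
   (n+1)-distributivity in the algebra of all compatible ternary operations on A
   (a subalgebra of a power of A, hence in the variety), to the projections
   x, y, z and the kernels of the substitutions z := x, y := x and z := y.

   Given x alpha y and x beta a (alpha gamma) b beta y, the elements
   e_j = J_j(x, s_j, y), with s_j = a for even j and s_j = b for odd j, are
   joined by e_j beta J_(j+1)(x, s_j, y) gamma e_(j+1), all inside the
   alpha-class of x, and e_0 = x.  Since n is even, the last link can be
   shortened to e_(n-1) beta J_n(a, b, y) gamma J_n(a, a, y) = y, which gives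
   2n steps. *)

From Stdlib Require Import PeanoNat Lia FunctionalExtensionality ProofIrrelevance.
Set Implicit Arguments.

Definition alternate (T : Type) (R1 R2 : rel T) (i : nat) : rel T :=
  if Nat.even i then R1 else R2.

Lemma alternate_succ (T : Type) (R1 R2 : rel T) i :
  alternate R1 R2 (S i) = alternate R2 R1 i.
Proof.
  unfold alternate. rewrite Nat.even_succ, <- Nat.negb_even.
  destruct (Nat.even i); reflexivity.
Qed.

Lemma rcomp_n_path (T : Type) {R1 R2 : rel T} m {u v} :
  1 <= m -> rcomp_n m R1 R2 u v ->
  exists d : nat -> T, d 0 = u /\ d m = v /\
    forall i, i < m -> alternate R1 R2 i (d i) (d (S i)).
Proof.
  revert R1 R2 u v. induction m as [|m IH]; intros R1 R2 u v Hm Huv; [lia|].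
  destruct m as [|m].
  - exists (fun i => match i with 0 => u | _ => v end).
    split; [reflexivity | split; [reflexivity|]].
    intros i Hi. replace i with 0 by lia. exact Huv.
  - destruct Huv as [w [Huw Hwv]].
    destruct (IH _ _ _ _ ltac:(lia) Hwv) as [d [Hd0 [Hdm Hd]]].
    exists (fun i => match i with 0 => u | S j => d j end).
    split; [reflexivity | split; [exact Hdm|]].
    intros [|j] Hj.
    + simpl. rewrite Hd0. exact Huw.
    + rewrite alternate_succ. apply Hd. lia.
Qed.

Lemma rcomp_n_cons2 (T : Type) (X Y : rel T) m u v w :
  1 <= m -> rcomp_n 2 X Y u v -> rcomp_n m X Y v w -> rcomp_n (2 + m) X Y u w.
Proof.
  intros Hm [t [Hut Htv]] Hvw.
  destruct m as [|m]; [lia|].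
  exists t. split; [exact Hut|]. exists v. split; assumption.
Qed.

Section CompatibleOperations.

Variable sg : signature.
Variable A : algebra sg.

Definition compatible (f : A -> A -> A -> A) : Prop :=
  forall th : rel A, is_congruence A th ->
  forall p p' q q' r r', th p p' -> th q q' -> th r r' -> th (f p q r) (f p' q' r').

Record compatible_op : Type := CompatibleOp {
  cop :> A -> A -> A -> A;
  cop_compatible : compatible cop
}.

Lemma compatible_op_ext (u w : compatible_op) : (forall p q r, u p q r = w p q r) -> u = w.
Proof.
  destruct u as [u Hu], w as [w Hw]. simpl. intro Euw.
  assert (u = w) as <-.
  { do 3 (apply functional_extensionality; intro). apply Euw. }
  f_equal. apply proof_irrelevance.
Qed.

Lemma interp_compatible (f : sg) (args : fin (arity sg f) -> compatible_op) :
  compatible (fun p q r => interp A f (fun i => args i p q r)).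
Proof.
  intros th Hth p p' q q' r r' Hp Hq Hr.
  apply Hth. intro i. apply cop_compatible; assumption.
Qed.

Definition compatible_ops : algebra sg :=
  @Algebra sg compatible_op
    (fun f args => CompatibleOp (interp_compatible f args)).

Lemma eval_compatible_ops (v : nat -> compatible_ops) (t : term sg) p q r :
  eval compatible_ops v t p q r = eval A (fun k => v k p q r) t.
Proof.
  induction t as [k|f args IH]; [reflexivity|].
  simpl. f_equal. apply functional_extensionality. intro i. apply IH.
Qed.

Lemma compatible_ops_in_variety (Sigma : identity sg -> Prop) :
  in_variety Sigma A -> in_variety Sigma compatible_ops.
Proof.
  intros HA e He v. apply compatible_op_ext. intros p q r.
  rewrite !eval_compatible_ops. apply HA, He.
Qed.

Definition agree_on (P : A -> A -> A -> Prop) : rel compatible_ops :=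
  fun u w => forall p q r, P p q r -> u p q r = w p q r.

Lemma agree_on_congruence (P : A -> A -> A -> Prop) :
  is_congruence compatible_ops (agree_on P).
Proof.
  unfold agree_on. split; [|split; [|split]].
  - reflexivity.
  - intros u w Huw p q r HP. symmetry. auto.
  - intros u v w Huv Hvw p q r HP. rewrite Huv; auto.
  - intros f u w Huw p q r HP. simpl. f_equal.
    apply functional_extensionality. intro i. auto.
Qed.

Lemma proj1_compatible : compatible (fun p q r => p).
Proof. intros th _ p p' q q' r r' Hp _ _. exact Hp. Qed.

Lemma proj2_compatible : compatible (fun p q r => q).
Proof. intros th _ p p' q q' r r' _ Hq _. exact Hq. Qed.

Lemma proj3_compatible : compatible (fun p q r => r).
Proof. intros th _ p p' q q' r r' _ _ Hr. exact Hr. Qed.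

End CompatibleOperations.

Arguments compatible {sg A} f.

Section JonssonOperations.

Variable sg : signature.
Variable A : algebra sg.
Variable k : nat.
Variable J : nat -> A -> A -> A -> A.

Record jonsson_operations : Prop := {
  jonsson_compatible : forall i, compatible (J i);
  jonsson_first : forall p q r, J 0 p q r = p;
  jonsson_last : forall p q r, J k p q r = r;
  jonsson_absorb : forall i p q, i <= k -> J i p q p = p;
  jonsson_even : forall i p r, i < k -> Nat.even i = true -> J i p p r = J (S i) p p r;
  jonsson_odd : forall i p r, i < k -> Nat.even i = false -> J i p r r = J (S i) p r r
}.

Hypothesis HJ : jonsson_operations.

Lemma jonsson_congr_first (th : rel A) i p q r :
  is_congruence A th -> i <= k -> th p r -> th (J i p q r) p.
Proof.
  intros Hth Hi Hpr. pose proof Hth as (Hrefl & Hsym & _ & _).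
  rewrite <- (jonsson_absorb HJ p q Hi) at 2.
  apply (jonsson_compatible HJ i Hth); auto.
Qed.

Lemma jonsson_congr_step (th : rel A) i p q r :
  is_congruence A th -> i < k -> th q (if Nat.even i then p else r) ->
  th (J i p q r) (J (S i) p q r).
Proof.
  intros Hth Hi Hq. pose proof Hth as (Hrefl & Hsym & Htrans & _).
  set (u := if Nat.even i then p else r) in Hq.
  assert (Hbridge : J i p u r = J (S i) p u r).
  { unfold u. destruct (Nat.even i) eqn:Ei.
    - apply (jonsson_even HJ); assumption.
    - apply (jonsson_odd HJ); assumption. }
  apply Htrans with (J i p u r).
  - apply (jonsson_compatible HJ i Hth); auto.
  - rewrite Hbridge. apply (jonsson_compatible HJ (S i) Hth); auto.
Qed.

End JonssonOperations.

Lemma distributive_jonsson_operations (sg : signature) (Sigma : identity sg -> Prop)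
    (k : nat) (A : algebra sg) :
  1 <= k -> distributive_k Sigma k -> in_variety Sigma A ->
  exists J, jonsson_operations A k J.
Proof.
  intros Hk HD HA.
  set (al := agree_on (A := A) (fun p q r => p = r)).
  set (be := agree_on (A := A) (fun p q r => p = q)).
  set (ga := agree_on (A := A) (fun p q r => q = r)).
  set (X := CompatibleOp (@proj1_compatible _ A)).
  set (Y := CompatibleOp (@proj2_compatible _ A)).
  set (Z := CompatibleOp (@proj3_compatible _ A)).
  assert (HXZ : rmeet al (rcomp be ga) X Z).
  { split; [|exists Y; split]; intros p q r E; exact E. }
  destruct (rcomp_n_path Hk
              (HD _ (compatible_ops_in_variety HA) al be ga
                  (agree_on_congruence _ _) (agree_on_congruence _ _)
                  (agree_on_congruence _ _) X Z HXZ))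
    as [d [Hd0 [Hdk Hd]]].
  assert (Hstep_al : forall i, i < k -> al (d i) (d (S i))).
  { intros i Hi. specialize (Hd i Hi). unfold alternate in Hd.
    destruct (Nat.even i); apply Hd. }
  exists (fun i => cop (d i)). split.
  - intro i. apply cop_compatible.
  - intros p q r. rewrite Hd0. reflexivity.
  - intros p q r. rewrite Hdk. reflexivity.
  - intros i p q. induction i as [|i IH]; intro Hi.
    + rewrite Hd0. reflexivity.
    + rewrite <- (Hstep_al i ltac:(lia) p q p eq_refl). apply IH. lia.
  - intros i p r Hi Ei. specialize (Hd i Hi). unfold alternate in Hd. rewrite Ei in Hd.
    apply (proj2 Hd). reflexivity.
  - intros i p r Hi Ei. specialize (Hd i Hi). unfold alternate in Hd. rewrite Ei in Hd.
    apply (proj2 Hd). reflexivity.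
Qed.

Section Chain.

Variable sg : signature.
Variable A : algebra sg.
Variables al be ga : rel A.
Hypothesis Hal : is_congruence A al.
Hypothesis Hbe : is_congruence A be.
Hypothesis Hga : is_congruence A ga.

Variable n : nat.
Hypothesis n_pos : 0 < n.
Hypothesis n_even : Nat.even n = true.
Variable J : nat -> A -> A -> A -> A.
Hypothesis HJ : jonsson_operations A (S n) J.

Variables x a b y : A.
Hypothesis Hxy : al x y.
Hypothesis Hxa : be x a.
Hypothesis Hab_al : al a b.
Hypothesis Hab_ga : ga a b.
Hypothesis Hby : be b y.

Definition chain_point (j : nat) : A := J j x (if Nat.even j then a else b) y.

Lemma chain_points_related i i' q q' :
  i <= S n -> i' <= S n -> al (J i x q y) (J i' x q' y).
Proof.
  intros Hi Hi'. pose proof Hal as (_ & alsym & altrans & _).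
  apply altrans with x; [|apply alsym]; apply (jonsson_congr_first HJ); assumption.
Qed.

Lemma chain_step j :
  S j < n -> rcomp_n 2 (rmeet al be) (rmeet al ga) (chain_point j) (chain_point (S j)).
Proof.
  intro Hj. pose proof Hbe as (_ & besym & _ & _). pose proof Hga as (gar & gasym & _ & _).
  unfold chain_point. rewrite Nat.even_succ, <- Nat.negb_even.
  set (s := if Nat.even j then a else b).
  exists (J (S j) x s y). split; split.
  - apply chain_points_related; lia.
  - apply (jonsson_congr_step HJ); [assumption | lia |].
    unfold s. destruct (Nat.even j); [apply besym|]; assumption.
  - apply chain_points_related; lia.
  - apply (jonsson_compatible HJ (S j) Hga); try apply gar.
    unfold s. destruct (Nat.even j); simpl; [|apply gasym]; assumption.
Qed.

Lemma chain_last : rcomp_n 2 (rmeet al be) (rmeet al ga) (chain_point (n - 1)) y.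
Proof.
  pose proof Hal as (alr & alsym & altrans & _).
  pose proof Hbe as (ber & _ & betrans & _). pose proof Hga as (gar & gasym & _ & _).
  assert (Hodd : Nat.even (n - 1) = false).
  { replace n with (S (n - 1)) in n_even by lia.
    rewrite Nat.even_succ, <- Nat.negb_even in n_even. destruct (Nat.even (n - 1)); easy. }
  assert (Hend : J n a a y = y).
  { rewrite (jonsson_even HJ) by (assumption || lia). apply (jonsson_last HJ). }
  assert (Hend_al : al (J n a b y) y).
  { rewrite <- Hend at 2. apply (jonsson_compatible HJ n Hal); auto. }
  exists (J n a b y). unfold chain_point. rewrite Hodd. split; split.
  - apply altrans with x; [apply (jonsson_congr_first HJ); (assumption || lia)|].
    apply altrans with y; [assumption | apply alsym, Hend_al].
  - apply betrans with (J n x b y).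
    + replace n with (S (n - 1)) at 2 by lia.
      apply (jonsson_congr_step HJ); [assumption | lia | rewrite Hodd; assumption].
    + apply (jonsson_compatible HJ n Hbe); auto.
  - exact Hend_al.
  - rewrite <- Hend at 2. apply (jonsson_compatible HJ n Hga); auto.
Qed.

Lemma chain_from j : j < n -> rcomp_n (2 * (n - j)) (rmeet al be) (rmeet al ga) (chain_point j) y.
Proof.
  remember (n - S j) as l eqn:El. revert j El.
  induction l as [|l IH]; intros j El Hj.
  - replace j with (n - 1) by lia. replace (2 * (n - (n - 1))) with 2 by lia.
    apply chain_last.
  - replace (2 * (n - j)) with (2 + 2 * (n - S j)) by lia.
    apply rcomp_n_cons2 with (chain_point (S j)); [lia | apply chain_step; lia |].
    apply IH; lia.
Qed.

Lemma chain_connects : rcomp_n (2 * n) (rmeet al be) (rmeet al ga) x y.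
Proof.
  replace x with (chain_point 0) by apply (jonsson_first HJ).
  replace (2 * n) with (2 * (n - 0)) by lia.
  apply chain_from. exact n_pos.
Qed.

End Chain.

Theorem proposition6p1 (sg : signature) (Sigma : identity sg -> Prop) (n : nat) :
  2 <= n -> Nat.Even n ->
  distributive_k Sigma (n + 1) ->
  modular_k Sigma (2 * n).
Proof.
  intros Hn Hev HD A HA al be ga Hal Hbe Hga x y [Hxy [a [Hxa [b [[Hab_al Hab_ga] Hby]]]]].
  destruct (distributive_jonsson_operations (k := n + 1) ltac:(lia) HD HA) as [J HJ].
  rewrite Nat.add_1_r in HJ.
  exact (chain_connects Hal Hbe Hga (n := n) ltac:(lia) (proj2 (Nat.even_spec n) Hev) HJ
           x a b y Hxy Hxa Hab_al Hab_ga Hby).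
Qed.
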